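(* For all $M>0$, all $\alpha>0$, all $q$ with $|q|<1$ and all $\epsilon>0$ there exist constants $C_1,C_2>0$ such that for all $p$ with $|p|<|q|$, \[ C_1\le|(zp^{-\alpha};q)|\,|z|^{-k\alpha}\,|q|^{\binom{k\alpha+1}{2}}\le C_2 \] for all $z$ with $1/M<|z|<M$ and $|1-z/w|>\epsilon$ for every zero $w$ of $z\mapsto(zp^{-\alpha};q)$ and of $z\mapsto(qp^\alpha/z;q)$, where $p=xq^k$ with $|x|=1$ and $k\in\mathbb{R}$.
   Context: $(y;q)=\prod_{r\ge0}(1-yq^r)$. For real $y$, $\binom{y}{2}=y(y-1)/2$. The paper phrases the condition on $z$ as ''$z$ away from the zeros''. *)

From Stdlib Require Import Reals.
From Coquelicot Require Import Coquelicot.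
Open Scope R_scope.

(* Principal argument of a nonzero complex number, in (-PI, PI]. *)
Definition Carg (z : C) : R :=
  let t := acos (Re z / Cmod z) in
  if Rle_dec 0 (Im z) then t else - t.

Definition Cpowr (z : C) (a : R) : C :=
  if Req_EM_T (Cmod z) 0 then 0%C
  else ((Rpower (Cmod z) a * cos (a * Carg z))%R,
        (Rpower (Cmod z) a * sin (a * Carg z))%R).

Fixpoint Cpow_nat (q : C) (n : nat) : C :=
  match n with O => 1%C | S m => Cmult q (Cpow_nat q m) end.

Fixpoint qpoch_part (y q : C) (n : nat) : C :=
  match n with
  | O => 1%C
  | S m => Cmult (qpoch_part y q m) (Cminus 1 (Cmult y (Cpow_nat q m)))
  end.

(* (y;q) = prod_{r>=0} (1 - y q^r): limit of the partial products
   (taken componentwise; it converges for |q| < 1). *)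
Definition qpoch (y q : C) : C :=
  (real (Lim_seq (fun n => Re (qpoch_part y q n))),
   real (Lim_seq (fun n => Im (qpoch_part y q n)))).

From Stdlib Require Import Reals Lra Lia.
From Coquelicot Require Import Coquelicot.
Open Scope R_scope.

(* Put y = z p^-alpha, so that |y q^r| = |z| |q|^(r - k alpha), and n = floor (k alpha).
   For r >= n the factors 1 - y q^r of (y; q) are 1 - O(|q|^(r - n)); for r < n write
   1 - y q^r = - y q^r (1 - 1 / (y q^r)), where 1 / (y q^r) = O(|q|^(n - 1 - r)).  Both
   families are geometric perturbations of 1 and are kept away from 0 by the distance of z to
   the zeros q^-r p^alpha, so their products are bounded above and below uniformly.  What is
   left, prod_(r < n) |y q^r|, is Gaussian in n and the normalization
   |z|^(-k alpha) |q|^((k alpha + 1) k alpha / 2) reduces it to |z|^(-t) |q|^(t (t + 1) / 2)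
   with t = k alpha - n in [0, 1). *)

Fixpoint rprod (f : nat -> R) (n : nat) : R :=
  match n with O => 1 | S m => rprod f m * f m end.

Fixpoint rsum (f : nat -> R) (n : nat) : R :=
  match n with O => 0 | S m => rsum f m + f m end.

Lemma rprod_ext f g n : (forall i, (i < n)%nat -> f i = g i) -> rprod f n = rprod g n.
Proof. induction n as [|n IH]; simpl; intros H; auto. rewrite IH, H; auto. Qed.

Lemma rsum_ext f g n : (forall i, (i < n)%nat -> f i = g i) -> rsum f n = rsum g n.
Proof. induction n as [|n IH]; simpl; intros H; auto. rewrite IH, H; auto. Qed.

Lemma rprod_mult f g n : rprod (fun i => f i * g i) n = rprod f n * rprod g n.
Proof. induction n as [|n IH]; simpl; [ring | rewrite IH; ring]. Qed.

Lemma rprod_exp f n : rprod (fun i => exp (f i)) n = exp (rsum f n).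
Proof. induction n as [|n IH]; simpl; [now rewrite exp_0 | now rewrite IH, exp_plus]. Qed.

Lemma rprod_le f g n : (forall i, 0 <= f i <= g i) -> rprod f n <= rprod g n.
Proof.
  intros H; induction n as [|n IH]; simpl; [lra|].
  assert (Hf : forall k, 0 <= rprod f k).
  { induction k; simpl; [lra | apply Rmult_le_pos; [|apply H]; auto]. }
  apply Rmult_le_compat; auto; apply H.
Qed.

Lemma rprod_rev f n : rprod f n = rprod (fun i => f (n - 1 - i)%nat) n.
Proof.
  assert (Hshift : forall g k, rprod g (S k) = g O * rprod (fun i => g (S i)) k).
  { intros g k; induction k as [|k IH]; [simpl; ring|].
    change (rprod g (S (S k))) with (rprod g (S k) * g (S k)). rewrite IH. simpl; ring. }
  induction n as [|n IH]; [reflexivity|].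
  rewrite (Hshift (fun i => f (S n - 1 - i)%nat)). change (rprod f (S n)) with (rprod f n * f n). rewrite IH.
  replace (S n - 1 - 0)%nat with n by lia.
  rewrite Rmult_comm. f_equal. apply rprod_ext. intros i Hi. f_equal. lia.
Qed.

Lemma rsum_scal K f n : rsum (fun i => K * f i) n = K * rsum f n.
Proof. induction n as [|n IH]; simpl; [ring | rewrite IH; ring]. Qed.

Lemma rsum_affine a b n : rsum (fun i => a + b * INR i) n = INR n * a + b * (INR n * (INR n - 1) / 2).
Proof. induction n as [|n IH]; simpl rsum; [simpl; field | rewrite IH, S_INR; field]. Qed.

Lemma rsum_geom_le rho n : 0 <= rho < 1 -> rsum (fun i => rho ^ i) n <= 1 / (1 - rho).
Proof.
  intros Hrho.
  assert (Hgeom : rsum (fun i => rho ^ i) n = (1 - rho ^ n) / (1 - rho)).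
  { induction n as [|n IH]; simpl; [field | rewrite IH; field]; lra. }
  rewrite Hgeom. unfold Rdiv. apply Rmult_le_compat_r.
  - left; apply Rinv_0_lt_compat; lra.
  - pose proof (pow_le rho n (proj1 Hrho)); lra.
Qed.

Lemma exp_le x y : x <= y -> exp x <= exp y.
Proof. intros [H|H]; [left; apply exp_increasing; auto | subst; lra]. Qed.

Lemma exp_neg2_le_one_minus a : 0 <= a <= 1/2 -> exp (-2 * a) <= 1 - a.
Proof.
  intros Ha. pose proof (exp_ineq1_le (2 * a)). pose proof (exp_pos (-2 * a)).
  assert (exp (-2 * a) * exp (2 * a) = 1).
  { rewrite <- exp_plus, <- exp_0. f_equal; ring. }
  nra.
Qed.

Lemma Cmod_one_minus_le (x : C) : Cmod (1 - x)%C <= 1 + Cmod x.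
Proof. eapply Rle_trans; [apply Cmod_triangle | rewrite Cmod_1, Cmod_opp; lra]. Qed.

Lemma Cmod_one_minus_ge (x : C) : 1 - Cmod x <= Cmod (1 - x)%C.
Proof.
  pose proof (Cmod_triangle (1 - x)%C x) as H.
  replace (1 - x + x)%C with (RtoC 1) in H by ring. rewrite Cmod_1 in H. lra.
Qed.

Lemma Cmod_one_minus_inv (c : C) : c <> 0%C -> Cmod (1 - c)%C = Cmod c * Cmod (1 - / c)%C.
Proof.
  intros Hc. rewrite <- Cmod_mult, <- Cmod_opp. f_equal. field. exact Hc.
Qed.

Definition prod_lower_bound (K rho e : R) (I0 : nat) : R :=
  e ^ I0 * exp (-2 * (K / (1 - rho))).

Section OneMinusProducts.

Variables (x : nat -> C) (K rho : R).
Hypotheses (HK : 0 <= K) (Hrho : 0 <= rho < 1) (Hx : forall i, Cmod (x i) <= K * rho ^ i).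

Lemma rprod_one_minus_le n : rprod (fun i => Cmod (1 - x i)%C) n <= exp (K / (1 - rho)).
Proof.
  apply Rle_trans with (rprod (fun i => exp (K * rho ^ i)) n).
  - apply rprod_le. intro i. split; [apply Cmod_ge_0|].
    eapply Rle_trans; [apply Cmod_one_minus_le|].
    eapply Rle_trans; [|apply exp_ineq1_le]. specialize (Hx i); lra.
  - rewrite rprod_exp, rsum_scal. apply exp_le.
    replace (K / (1 - rho)) with (K * (1 / (1 - rho))) by (unfold Rdiv; ring).
    apply Rmult_le_compat_l; auto. apply rsum_geom_le; auto.
Qed.

Variables (e : R) (I0 : nat).
Hypotheses (He : 0 < e <= 1) (HI0 : forall i, (I0 <= i)%nat -> K * rho ^ i <= 1/2)
  (Hsep : forall i, 1/2 < Cmod (x i) -> e <= Cmod (1 - x i)%C).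

Let c i := if Nat.ltb i I0 then e else 1.

Lemma rprod_cutoff_ge n : e ^ I0 <= rprod c n.
Proof.
  assert (Hmin : forall k, rprod c k = e ^ Nat.min k I0).
  { induction k as [|k IH]; [reflexivity|]. cbn [rprod]. rewrite IH. unfold c.
    destruct (Nat.ltb k I0) eqn:E.
    - apply Nat.ltb_lt in E. replace (Nat.min (S k) I0) with (S (Nat.min k I0)) by lia.
      simpl; ring.
    - apply Nat.ltb_ge in E. replace (Nat.min (S k) I0) with (Nat.min k I0) by lia. ring. }
  rewrite Hmin. replace I0 with (Nat.min n I0 + (I0 - Nat.min n I0))%nat at 1 by lia.
  rewrite pow_add. pose proof (pow_le e (Nat.min n I0) (Rlt_le _ _ (proj1 He))).
  assert (e ^ (I0 - Nat.min n I0) <= 1).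
  { rewrite <- (pow1 (I0 - Nat.min n I0)). apply pow_incr; lra. }
  pose proof (pow_le e (I0 - Nat.min n I0) (Rlt_le _ _ (proj1 He))). nra.
Qed.

Lemma one_minus_factor_ge i : c i * exp (-2 * (K * rho ^ i)) <= Cmod (1 - x i)%C.
Proof.
  assert (Hc : 0 < c i <= 1) by (unfold c; destruct (Nat.ltb i I0); lra).
  pose proof (exp_pos (-2 * (K * rho ^ i))).
  destruct (Rle_lt_dec (Cmod (x i)) (1/2)) as [Hsmall|Hbig].
  - assert (exp (-2 * (K * rho ^ i)) <= Cmod (1 - x i)%C).
    { eapply Rle_trans; [apply exp_le with (y := -2 * Cmod (x i)); specialize (Hx i); lra|].
      eapply Rle_trans; [apply exp_neg2_le_one_minus; split; [apply Cmod_ge_0 | lra]|].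
      apply Cmod_one_minus_ge. }
    nra.
  - assert (Hi : (i < I0)%nat).
    { destruct (Nat.lt_ge_cases i I0) as [?|Hge]; auto. specialize (HI0 i Hge). specialize (Hx i). lra. }
    unfold c. apply Nat.ltb_lt in Hi. rewrite Hi. specialize (Hsep i Hbig).
    assert (exp (-2 * (K * rho ^ i)) <= 1).
    { rewrite <- exp_0. apply exp_le. pose proof (pow_le rho i (proj1 Hrho)). nra. }
    nra.
Qed.

Lemma rprod_one_minus_ge n : prod_lower_bound K rho e I0 <= rprod (fun i => Cmod (1 - x i)%C) n.
Proof.
  apply Rle_trans with (rprod (fun i => c i * exp (-2 * (K * rho ^ i))) n).
  - rewrite rprod_mult, rprod_exp. unfold prod_lower_bound.
    apply Rmult_le_compat.
    + apply pow_le; lra.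
    + left; apply exp_pos.
    + apply rprod_cutoff_ge.
    + apply exp_le.
      rewrite (rsum_ext _ (fun i => (-2 * K) * rho ^ i)) by (intros; ring).
      rewrite rsum_scal.
      replace (-2 * (K / (1 - rho))) with (-2 * K * (1 / (1 - rho))) by (unfold Rdiv; ring).
      apply Rmult_le_compat_neg_l; [lra | apply rsum_geom_le, Hrho].
  - apply rprod_le. intro i. split; [|apply one_minus_factor_ge].
    apply Rmult_le_pos; [unfold c; destruct (Nat.ltb i I0); lra | left; apply exp_pos].
Qed.

End OneMinusProducts.

Lemma Cmod_Cpow_nat (q : C) n : Cmod (Cpow_nat q n) = Cmod q ^ n.
Proof. induction n as [|n IH]; simpl; [apply Cmod_1 | rewrite Cmod_mult, IH; ring]. Qed.

Lemma Cpow_nat_neq0 (q : C) r : q <> 0%C -> Cpow_nat q r <> 0%C.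
Proof.
  intros Hq E. apply (f_equal Cmod) in E. rewrite Cmod_Cpow_nat, Cmod_0 in E.
  revert E. apply pow_nonzero, Rgt_not_eq, Cmod_gt_0, Hq.
Qed.

Lemma Cpow_nat_add q n m : Cpow_nat q (n + m) = (Cpow_nat q n * Cpow_nat q m)%C.
Proof. induction n as [|n IH]; simpl; [ring | rewrite IH; ring]. Qed.

Lemma Cmod_qpoch_part y q n :
  Cmod (qpoch_part y q n) = rprod (fun r => Cmod (1 - y * Cpow_nat q r)%C) n.
Proof. induction n as [|n IH]; simpl; [apply Cmod_1 | rewrite Cmod_mult, IH; ring]. Qed.

Lemma qpoch_part_add y q n m :
  qpoch_part y q (n + m) = (qpoch_part y q n * qpoch_part (y * Cpow_nat q n) q m)%C.
Proof.
  induction m as [|m IH]; simpl.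
  - rewrite Nat.add_0_r; ring.
  - rewrite Nat.add_succ_r. simpl. rewrite IH, Cpow_nat_add. ring.
Qed.

Lemma ex_lim_seq_cauchy_geom (u : nat -> R) c rho : 0 <= rho < 1 ->
  (forall n j, Rabs (u (n + j)%nat - u n) <= c * rho ^ n) -> ex_lim_seq_cauchy u.
Proof.
  intros Hrho Hu eps.
  assert (Hc : 0 <= c) by (specialize (Hu O O); rewrite Nat.add_0_r, Rminus_diag, Rabs_R0 in Hu; simpl in Hu; lra).
  destruct (pow_lt_1_zero rho ltac:(rewrite Rabs_right; lra) (eps / (2 * (c + 1))))
    as [N HN]; [apply Rdiv_lt_0_compat; [apply cond_pos | lra]|].
  exists N. intros n m Hn Hm.
  assert (Hclose : forall k, (N <= k)%nat -> Rabs (u k - u N) < eps / 2).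
  { intros k Hk. replace k with (N + (k - N))%nat by lia.
    eapply Rle_lt_trans; [apply Hu|].
    specialize (HN N (le_n N)). rewrite Rabs_right in HN by (apply Rle_ge, pow_le; lra).
    pose proof (pow_le rho N (proj1 Hrho)). pose proof (cond_pos eps).
    apply Rle_lt_trans with ((c + 1) * rho ^ N); [nra|].
    replace (eps / 2) with ((c + 1) * (eps / (2 * (c + 1)))) by (field; lra).
    apply Rmult_lt_compat_l; lra. }
  replace (u n - u m) with ((u n - u N) - (u m - u N)) by ring.
  eapply Rle_lt_trans; [apply Rabs_triang|]. rewrite Rabs_Ropp.
  pose proof (Hclose n Hn). pose proof (Hclose m Hm). lra.
Qed.

Lemma Cmod_le_Rabs_Re_Im (z : C) : Cmod z <= Rabs (Re z) + Rabs (Im z).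
Proof.
  destruct z as [a b]. unfold Cmod, Re, Im; cbn [fst snd].
  pose proof (Rabs_pos a). pose proof (Rabs_pos b).
  rewrite <- (sqrt_pow2 (Rabs a + Rabs b)) by lra.
  apply sqrt_le_1_alt. rewrite <- (pow2_abs a), <- (pow2_abs b). nra.
Qed.

Lemma Rabs_Cmod_sub_le (u v : C) : Rabs (Cmod u - Cmod v) <= Cmod (u - v)%C.
Proof.
  pose proof (Cmod_triangle (u - v)%C v) as Hu.
  pose proof (Cmod_triangle (v - u)%C u) as Hv.
  replace (u - v + v)%C with u in Hu by ring. replace (v - u + u)%C with v in Hv by ring.
  rewrite <- (Cmod_opp (v - u)%C) in Hv. replace (- (v - u))%C with (u - v)%C in Hv by ring.
  apply Rabs_le; lra.
Qed.

Lemma is_lim_seq_Cmod (a : nat -> C) (lr li : R) :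
  is_lim_seq (fun n => Re (a n)) lr -> is_lim_seq (fun n => Im (a n)) li ->
  is_lim_seq (fun n => Cmod (a n)) (Cmod (lr, li)).
Proof.
  intros Hr Hi.
  set (d n := Rabs (Re (a n) - lr) + Rabs (Im (a n) - li)).
  assert (Hdev : forall (u : nat -> R) (l : R), is_lim_seq u l -> is_lim_seq (fun n => Rabs (u n - l)) 0).
  { intros u l Hu. replace (Finite 0) with (Rbar_abs (l - l))
      by (simpl; rewrite Rminus_diag, Rabs_R0; reflexivity).
    apply is_lim_seq_abs, is_lim_seq_minus'; [exact Hu | apply is_lim_seq_const]. }
  assert (Hd : is_lim_seq d 0).
  { replace 0 with (0 + 0) by ring. apply is_lim_seq_plus'; apply Hdev; auto. }
  apply (is_lim_seq_le_le (fun n => Cmod (lr, li) - d n) _ (fun n => Cmod (lr, li) + d n)).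
  - intro n. apply Rabs_le_between'.
    eapply Rle_trans; [apply Rabs_Cmod_sub_le|].
    eapply Rle_trans; [apply Cmod_le_Rabs_Re_Im|].
    unfold d. destruct (a n); apply Req_le; reflexivity.
  - pose proof (is_lim_seq_minus' _ _ _ _ (is_lim_seq_const (Cmod (lr, li))) Hd) as H.
    now rewrite Rminus_0_r in H.
  - pose proof (is_lim_seq_plus' _ _ _ _ (is_lim_seq_const (Cmod (lr, li))) Hd) as H.
    now rewrite Rplus_0_r in H.
Qed.

Section Convergence.

Variables (y q : C).
Hypothesis Hq : Cmod q < 1.

Let B := exp (Cmod y / (1 - Cmod q)).

Lemma Cmod_qpoch_part_le n : Cmod (qpoch_part y q n) <= B.
Proof.
  rewrite Cmod_qpoch_part. apply rprod_one_minus_le.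
  - apply Cmod_ge_0.
  - split; [apply Cmod_ge_0 | exact Hq].
  - intro i. rewrite Cmod_mult, Cmod_Cpow_nat. lra.
Qed.

Lemma Cmod_qpoch_part_diff n j :
  Cmod (qpoch_part y q (n + j) - qpoch_part y q n)%C <= B * Cmod y / (1 - Cmod q) * Cmod q ^ n.
Proof.
  set (rho := Cmod q). assert (Hrho : 0 <= rho < 1) by (split; [apply Cmod_ge_0 | exact Hq]).
  assert (HB : 0 <= B * Cmod y) by (apply Rmult_le_pos; [left; apply exp_pos | apply Cmod_ge_0]).
  assert (Hstep : forall k, Cmod (qpoch_part y q (S k) - qpoch_part y q k)%C <= B * Cmod y * rho ^ k).
  { intro k. simpl.
    replace (qpoch_part y q k * (1 - y * Cpow_nat q k) - qpoch_part y q k)%C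
      with (- (qpoch_part y q k * (y * Cpow_nat q k)))%C by ring.
    rewrite Cmod_opp, !Cmod_mult, Cmod_Cpow_nat, <- Rmult_assoc.
    apply Rmult_le_compat_r; [apply pow_le; lra|].
    apply Rmult_le_compat_r; [apply Cmod_ge_0 | apply Cmod_qpoch_part_le]. }
  assert (Htel : Cmod (qpoch_part y q (n + j) - qpoch_part y q n)%C
                 <= B * Cmod y * rho ^ n * (1 - rho ^ j) / (1 - rho)).
  { induction j as [|j IH].
    - rewrite Nat.add_0_r. replace (qpoch_part y q n - qpoch_part y q n)%C with (RtoC 0) by ring.
      rewrite Cmod_0. simpl. right; field; lra.
    - rewrite Nat.add_succ_r.
      replace (qpoch_part y q (S (n + j)) - qpoch_part y q n)%C
        with ((qpoch_part y q (S (n + j)) - qpoch_part y q (n + j))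
              + (qpoch_part y q (n + j) - qpoch_part y q n))%C by ring.
      eapply Rle_trans; [apply Cmod_triangle|].
      eapply Rle_trans; [apply Rplus_le_compat; [apply Hstep | apply IH]|].
      right. rewrite pow_add. simpl. field. lra. }
  eapply Rle_trans; [apply Htel|]. unfold Rdiv.
  pose proof (pow_le rho j (proj1 Hrho)). pose proof (pow_le rho n (proj1 Hrho)).
  pose proof (Rinv_0_lt_compat (1 - rho) ltac:(lra)).
  assert (0 <= B * Cmod y * rho ^ n) by (apply Rmult_le_pos; auto).
  replace (B * Cmod y * / (1 - rho) * rho ^ n) with (B * Cmod y * rho ^ n * 1 * / (1 - rho)) by ring.
  apply Rmult_le_compat_r; [lra|]. apply Rmult_le_compat_l; lra.
Qed.

Lemma Cmod_qpoch_part_lim : is_lim_seq (fun n => Cmod (qpoch_part y q n)) (Cmod (qpoch y q)).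
Proof.
  assert (Hrho : 0 <= Cmod q < 1) by (split; [apply Cmod_ge_0 | exact Hq]).
  assert (Hcauchy : forall f : C -> R, (forall u v, f (u - v)%C = f u - f v) ->
            (forall u, Rabs (f u) <= Cmod u) -> ex_finite_lim_seq (fun n => f (qpoch_part y q n))).
  { intros f Hlin Hf. apply ex_lim_seq_cauchy_corr.
    apply (ex_lim_seq_cauchy_geom _ (B * Cmod y / (1 - Cmod q)) (Cmod q) Hrho).
    intros n j. rewrite <- Hlin. eapply Rle_trans; [apply Hf | apply Cmod_qpoch_part_diff]. }
  destruct (Hcauchy Re) as [lr Hr]; [intros [] []; simpl; ring | apply re_le_Cmod |].
  destruct (Hcauchy Im) as [li Hi]; [intros [] []; simpl; ring | |].
  { intro u. eapply Rle_trans; [apply Rmax_r | apply Rmax_Cmod]. }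
  replace (qpoch y q) with ((lr, li) : C).
  - apply is_lim_seq_Cmod; auto.
  - unfold qpoch. now rewrite (is_lim_seq_unique _ _ Hr), (is_lim_seq_unique _ _ Hi).
Qed.

End Convergence.

Lemma qpoch_inv_pow_eq0 (q : C) r : q <> 0%C -> qpoch (/ Cpow_nat q r) q = 0%C.
Proof.
  intros Hq. pose proof (Cpow_nat_neq0 q r Hq) as Hqr.
  assert (Hvanish : forall m, qpoch_part (/ Cpow_nat q r) q (S r + m) = 0%C).
  { induction m as [|m IH].
    - rewrite Nat.add_0_r. simpl. replace (1 - / Cpow_nat q r * Cpow_nat q r)%C with (RtoC 0)
        by (field; exact Hqr). ring.
    - rewrite Nat.add_succ_r. cbn [qpoch_part]. rewrite IH. ring. }
  assert (Hlim : forall f : C -> R, f 0%C = 0 ->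
            Lim_seq (fun n => f (qpoch_part (/ Cpow_nat q r) q n)) = 0).
  { intros f Hf. rewrite <- Lim_seq_const. apply Lim_seq_ext_loc.
    exists (S r). intros n Hn. replace n with (S r + (n - S r))%nat by lia. now rewrite Hvanish. }
  unfold qpoch. rewrite (Hlim Re), (Hlim Im); reflexivity.
Qed.

Lemma Cmod_Cpowr (p : C) a : Cmod p <> 0 -> Cmod (Cpowr p a) = Rpower (Cmod p) a.
Proof.
  intros Hp. unfold Cpowr. destruct (Req_EM_T (Cmod p) 0) as [E|_]; [contradiction|].
  unfold Cmod at 1. cbn [fst snd].
  set (r := Rpower (Cmod p) a).
  replace ((r * cos (a * Carg p)) ^ 2 + (r * sin (a * Carg p)) ^ 2) with (r ^ 2)
    by (pose proof (sin2_cos2 (a * Carg p)); unfold Rsqr in *; nra).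
  apply sqrt_pow2. left; apply exp_pos.
Qed.

Lemma Cmod_one_minus_inv_ge (d : C) eps : d <> 0%C ->
  eps < Cmod (1 - d)%C -> 1/2 < Cmod (/ d) -> eps / 2 <= Cmod (1 - / d)%C.
Proof.
  intros Hd Hsep Hinv.
  replace (1 - / d)%C with (- ((1 - d) * / d))%C by (field; exact Hd).
  rewrite Cmod_opp, Cmod_mult. pose proof (Cmod_ge_0 (1 - d)%C). nra.
Qed.

Lemma gauss_exponent_bounds (l L lam lnM : R) (n : nat) :
  L < 0 -> - lnM < l < lnM -> INR n <= lam < INR n + 1 ->
  L - lnM <= INR n * l + L * (INR n * (INR n - 1) / 2) - INR n * lam * L
             - lam * l + (lam + 1) * lam / 2 * L <= lnM.
Proof.
  intros HL Hl Hn.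
  set (t := lam - INR n).
  replace (INR n * l + L * (INR n * (INR n - 1) / 2) - INR n * lam * L - lam * l + (lam + 1) * lam / 2 * L)
    with (- t * l + L * (t * t + t) / 2) by (unfold t; field).
  assert (0 <= t < 1) by (unfold t; lra).
  assert (0 <= t * t + t <= 2) by nra.
  split; nra.
Qed.

Lemma is_lim_seq_bounds (u : nat -> R) (l a b : R) (N : nat) :
  (forall n, (N <= n)%nat -> a <= u n <= b) -> is_lim_seq u l -> a <= l <= b.
Proof.
  intros Hu Hl. split.
  - apply (is_lim_seq_le_loc (fun _ => a) u a l); [|apply is_lim_seq_const | exact Hl].
    exists N. intros n Hn. apply Hu, Hn.
  - apply (is_lim_seq_le_loc u (fun _ => b) l b); [|exact Hl | apply is_lim_seq_const].
    exists N. intros n Hn. apply Hu, Hn.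
Qed.

Section NormalizedProducts.

Variables (y q : C) (eps M lam l : R) (n I0 : nat).
Hypotheses (Hq : 0 < Cmod q < 1) (HM : 1 < M) (Heps : 0 < eps)
  (Hl : - ln M < l < ln M) (Hn : INR n <= lam < INR n + 1)
  (HI0 : forall i, (I0 <= i)%nat -> M / Cmod q * Cmod q ^ i <= 1/2)
  (Hmod : forall r, Cmod (y * Cpow_nat q r)%C = exp (l + (INR r - lam) * ln (Cmod q)))
  (Hsep : forall r, eps < Cmod (1 - y * Cpow_nat q r)%C).

Let rho := Cmod q.
Let L := ln rho.
Let K := M / rho.

Let HL : L < 0.
Proof. unfold L. rewrite <- ln_1. apply ln_increasing; unfold rho; lra. Qed.

Let HK : M <= K.
Proof.
  unfold K, Rdiv. rewrite <- (Rmult_1_r M) at 1. apply Rmult_le_compat_l; [lra|].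
  rewrite <- Rinv_1. apply Rinv_le_contravar; unfold rho; lra.
Qed.

Let Hpow i : rho ^ i = exp (INR i * L).
Proof. rewrite <- Rpower_pow by (unfold rho; lra). reflexivity. Qed.

Let Hexp_l : exp l <= M /\ exp (- l) <= M.
Proof. rewrite <- (exp_ln M) by lra. split; apply exp_le; lra. Qed.

Lemma y_pow_neq0 r : (y * Cpow_nat q r)%C <> 0%C.
Proof.
  intro E. pose proof (Hmod r) as H. rewrite E, Cmod_0 in H.
  pose proof (exp_pos (l + (INR r - lam) * ln (Cmod q))). lra.
Qed.

Lemma Cmod_tail_factor_le i : Cmod (y * Cpow_nat q n * Cpow_nat q i)%C <= M / Cmod q * Cmod q ^ i.
Proof.
  rewrite <- Cmult_assoc, <- Cpow_nat_add, Hmod, plus_INR. fold rho L K.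
  replace (l + (INR n + INR i - lam) * L) with (l + (INR n - lam) * L + INR i * L) by ring.
  rewrite !exp_plus, <- Hpow.
  assert (exp ((INR n - lam) * L) <= / rho).
  { unfold rho. rewrite <- (exp_ln (Cmod q)), <- exp_Ropp by lra. fold rho L. apply exp_le. nra. }
  pose proof (exp_pos l). pose proof (exp_pos ((INR n - lam) * L)).
  pose proof (pow_le rho i (Cmod_ge_0 q)).
  unfold K, Rdiv. apply Rmult_le_compat_r; [lra|]. destruct Hexp_l. nra.
Qed.

Lemma Cmod_head_factor_le i : (i < n)%nat ->
  Cmod (/ (y * Cpow_nat q (n - 1 - i)))%C <= M / Cmod q * Cmod q ^ i.
Proof.
  intros Hi. rewrite Cmod_inv by apply y_pow_neq0. rewrite Hmod, <- exp_Ropp. fold rho L K.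
  assert (Hr : INR (n - 1 - i) + INR i + 1 = INR n)
    by (rewrite <- plus_INR, <- S_INR; f_equal; lia).
  replace (- (l + (INR (n - 1 - i) - lam) * L)) with (- l + (lam - INR (n - 1 - i)) * L) by ring.
  rewrite exp_plus, Hpow.
  assert (exp ((lam - INR (n - 1 - i)) * L) <= exp (INR i * L)) by (apply exp_le; nra).
  pose proof (exp_pos (- l)). pose proof (exp_pos (INR i * L)). destruct Hexp_l. nra.
Qed.

Lemma tail_product_bounds m :
  prod_lower_bound (M / Cmod q) (Cmod q) (Rmin (eps / 2) 1) I0
  <= Cmod (qpoch_part (y * Cpow_nat q n) q m) <= exp (M / Cmod q / (1 - Cmod q)).
Proof.
  rewrite Cmod_qpoch_part.
  assert (HK0 : 0 <= M / Cmod q) by (fold rho K; lra).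
  assert (Hrho : 0 <= Cmod q < 1) by lra.
  split.
  - apply rprod_one_minus_ge; auto.
    + apply Cmod_tail_factor_le.
    + split; [apply Rmin_glb_lt|apply Rmin_r]; lra.
    + intros i _. rewrite <- Cmult_assoc, <- Cpow_nat_add.
      pose proof (Hsep (n + i)%nat). pose proof (Rmin_l (eps / 2) 1). lra.
  - apply rprod_one_minus_le; auto. apply Cmod_tail_factor_le.
Qed.

Lemma head_product_bounds :
  prod_lower_bound (M / Cmod q) (Cmod q) (Rmin (eps / 2) 1) I0
  <= rprod (fun r => Cmod (1 - / (y * Cpow_nat q r))%C) n <= exp (M / Cmod q / (1 - Cmod q)).
Proof.
  set (x i := if Nat.ltb i n then (/ (y * Cpow_nat q (n - 1 - i)))%C else 0%C).
  rewrite rprod_rev, (rprod_ext _ (fun i => Cmod (1 - x i)%C)).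
  2:{ intros i Hi. unfold x. apply Nat.ltb_lt in Hi. now rewrite Hi. }
  assert (HK0 : 0 <= M / Cmod q) by (fold rho K; lra).
  assert (Hrho : 0 <= Cmod q < 1) by lra.
  assert (Hx : forall i, Cmod (x i) <= M / Cmod q * Cmod q ^ i).
  { intro i. unfold x. destruct (Nat.ltb i n) eqn:E.
    - apply Cmod_head_factor_le, Nat.ltb_lt, E.
    - rewrite Cmod_0. pose proof (pow_le (Cmod q) i (proj1 Hrho)). nra. }
  split.
  - apply rprod_one_minus_ge; auto.
    + split; [apply Rmin_glb_lt|apply Rmin_r]; lra.
    + intros i Hbig. unfold x in *. destruct (Nat.ltb i n).
      * eapply Rle_trans; [apply Rmin_l|]. apply Cmod_one_minus_inv_ge; auto. apply y_pow_neq0.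
      * rewrite Cmod_0 in Hbig. lra.
  - apply rprod_one_minus_le; auto.
Qed.

Lemma Cmod_qpoch_part_split m :
  Cmod (qpoch_part y q (n + m)) =
  exp (INR n * l + L * (INR n * (INR n - 1) / 2) - INR n * lam * L)
  * rprod (fun r => Cmod (1 - / (y * Cpow_nat q r))%C) n
  * Cmod (qpoch_part (y * Cpow_nat q n) q m).
Proof.
  rewrite qpoch_part_add, Cmod_mult, Cmod_qpoch_part.
  rewrite (rprod_ext _ (fun r => exp (l + (INR r - lam) * L) * Cmod (1 - / (y * Cpow_nat q r))%C)).
  2:{ intros r _. rewrite Cmod_one_minus_inv by apply y_pow_neq0. now rewrite Hmod. }
  rewrite rprod_mult, rprod_exp.
  rewrite (rsum_ext _ (fun r => (l - lam * L) + L * INR r)) by (intros; ring).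
  rewrite rsum_affine. f_equal. f_equal. f_equal. ring.
Qed.

Lemma normalized_qpoch_part_bounds m :
  Cmod q / M * prod_lower_bound (M / Cmod q) (Cmod q) (Rmin (eps / 2) 1) I0 ^ 2
  <= Cmod (qpoch_part y q (n + m)) * exp (- lam * l) * exp ((lam + 1) * lam / 2 * ln (Cmod q))
  <= M * exp (M / Cmod q / (1 - Cmod q)) ^ 2.
Proof.
  rewrite Cmod_qpoch_part_split. fold rho L.
  set (Phase := exp (INR n * l + L * (INR n * (INR n - 1) / 2) - INR n * lam * L)
                * exp (- lam * l) * exp ((lam + 1) * lam / 2 * L)).
  assert (HPhase : rho / M <= Phase <= M).
  { unfold Phase. rewrite <- !exp_plus.
    replace (rho / M) with (exp (L - ln M))
      by (unfold Rminus, L; rewrite exp_plus, exp_Ropp, !exp_ln by (unfold rho; lra); reflexivity).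
    rewrite <- (exp_ln M) at 2 by lra.
    pose proof (gauss_exponent_bounds l L lam (ln M) n HL Hl Hn).
    split; apply exp_le; lra. }
  pose proof head_product_bounds as HB1. pose proof (tail_product_bounds m) as HB2.
  fold rho in HB1, HB2 |- *.
  set (B1 := rprod (fun r => Cmod (1 - / (y * Cpow_nat q r))%C) n) in *.
  set (B2 := Cmod (qpoch_part (y * Cpow_nat q n) q m)) in *.
  set (Lo := prod_lower_bound (M / rho) rho (Rmin (eps / 2) 1) I0) in *.
  set (U := exp (M / rho / (1 - rho))) in *.
  assert (HLo : 0 <= Lo).
  { unfold Lo, prod_lower_bound. apply Rmult_le_pos; [|left; apply exp_pos].
    apply pow_le. apply Rmin_glb; lra. }
  replace (exp (INR n * l + L * (INR n * (INR n - 1) / 2) - INR n * lam * L) * B1 * B2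
           * exp (- lam * l) * exp ((lam + 1) * lam / 2 * L)) with (Phase * (B1 * B2))
    by (unfold Phase; ring).
  assert (0 < rho / M) by (apply Rdiv_lt_0_compat; unfold rho; lra).
  assert (Lo ^ 2 <= B1 * B2 <= U ^ 2) by (simpl; rewrite Rmult_1_r; split; apply Rmult_le_compat; lra).
  split; apply Rmult_le_compat; try lra; nra.
Qed.

Lemma normalized_qpoch_bounds :
  Cmod q / M * prod_lower_bound (M / Cmod q) (Cmod q) (Rmin (eps / 2) 1) I0 ^ 2
  <= Cmod (qpoch y q) * exp (- lam * l) * exp ((lam + 1) * lam / 2 * ln (Cmod q))
  <= M * exp (M / Cmod q / (1 - Cmod q)) ^ 2.
Proof.
  apply (is_lim_seq_bounds (fun N => Cmod (qpoch_part y q N) * exp (- lam * l)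
                                      * exp ((lam + 1) * lam / 2 * ln (Cmod q))) _ _ _ n).
  - intros N HN. replace N with (n + (N - n))%nat by lia. apply normalized_qpoch_part_bounds.
  - apply is_lim_seq_mult'; [apply is_lim_seq_mult'|]; try apply is_lim_seq_const.
    apply Cmod_qpoch_part_lim. lra.
Qed.

End NormalizedProducts.

Lemma Cmod_scaled_pow (z p q : C) (alpha k : R) r :
  0 < Cmod q -> Cmod p = Rpower (Cmod q) k -> z <> 0%C ->
  Cmod (z * Cpowr p (- alpha) * Cpow_nat q r)%C
  = exp (ln (Cmod z) + (INR r - k * alpha) * ln (Cmod q)).
Proof.
  intros Hq Hpk Hz.
  assert (Hp : Cmod p <> 0) by (rewrite Hpk; apply Rgt_not_eq, exp_pos).
  rewrite !Cmod_mult, Cmod_Cpowr, Cmod_Cpow_nat by exact Hp.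
  replace (Cmod z) with (exp (ln (Cmod z))) at 1 by (apply exp_ln, Cmod_gt_0, Hz).
  rewrite <- (Rpower_pow r (Cmod q)) by exact Hq.
  unfold Rpower. rewrite Hpk. unfold Rpower. rewrite ln_exp, <- !exp_plus.
  f_equal. ring.
Qed.

Lemma qpoch_zero_separation (z P q : C) eps : P <> 0%C -> q <> 0%C ->
  (forall w, qpoch (w * P) q = 0%C -> eps < Cmod (1 - z / w)%C) ->
  forall r, eps < Cmod (1 - z * P * Cpow_nat q r)%C.
Proof.
  intros HP Hq Hsep r. pose proof (Cpow_nat_neq0 q r Hq) as Hqr.
  replace (z * P * Cpow_nat q r)%C with (z / / (P * Cpow_nat q r))%C by (field; auto).
  apply Hsep. replace (/ (P * Cpow_nat q r) * P)%C with (/ Cpow_nat q r)%C by (field; auto).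
  now apply qpoch_inv_pow_eq0.
Qed.

Lemma exists_nat_floor lam : 0 <= lam -> exists n, INR n <= lam < INR n + 1.
Proof.
  intros Hlam. destruct (base_Int_part lam) as [Hlo Hhi].
  assert (Hpos : (0 <= Int_part lam)%Z) by (assert (-1 < Int_part lam)%Z by (apply lt_IZR; lra); lia).
  exists (Z.to_nat (Int_part lam)). rewrite INR_IZR_INZ, Znat.Z2Nat.id by exact Hpos. lra.
Qed.

Lemma exists_geom_small (K rho : R) : 0 <= K -> 0 <= rho < 1 ->
  exists I0, forall i, (I0 <= i)%nat -> K * rho ^ i <= 1/2.
Proof.
  intros HK Hrho.
  destruct (pow_lt_1_zero rho ltac:(rewrite Rabs_right; lra) (1 / (2 * (K + 1))))
    as [I0 HI0]; [apply Rdiv_lt_0_compat; lra|].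
  exists I0. intros i Hi. specialize (HI0 i Hi).
  rewrite Rabs_right in HI0 by (apply Rle_ge, pow_le; lra).
  apply Rle_trans with ((K + 1) * rho ^ i); [pose proof (pow_le rho i (proj1 Hrho)); nra|].
  replace (1 / 2) with ((K + 1) * (1 / (2 * (K + 1)))) by (field; lra).
  apply Rmult_le_compat_l; lra.
Qed.

Lemma Rpower_lt_self_exponent_gt1 (x k : R) : 0 < x < 1 -> Rpower x k < x -> 1 < k.
Proof.
  intros Hx H. unfold Rpower in H. rewrite <- (exp_ln x) in H at 2 by lra.
  apply exp_lt_inv in H. assert (ln x < 0) by (rewrite <- ln_1; apply ln_increasing; lra). nra.
Qed.

Lemma annulus_ln_bounds (M x : R) : 0 < M -> 1 / M < x < M ->
  1 < M /\ 0 < x /\ - ln M < ln x < ln M.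
Proof.
  intros HM Hx. pose proof (Rdiv_lt_0_compat 1 M ltac:(lra) HM).
  assert (HM1 : 1 < M).
  { assert (Hsq : 1 / M * M < M * M) by (apply Rmult_lt_compat_r; lra).
    replace (1 / M * M) with 1 in Hsq by (field; lra). nra. }
  do 2 (split; [lra|]). rewrite <- ln_Rinv by lra. replace (/ M) with (1 / M) by (unfold Rdiv; ring).
  split; apply ln_increasing; lra.
Qed.

Lemma Cpowr_neq0 (p : C) a : Cmod p <> 0 -> Cpowr p a <> 0%C.
Proof.
  intros Hp E. apply (f_equal Cmod) in E. rewrite Cmod_Cpowr, Cmod_0 in E by exact Hp.
  revert E. apply Rgt_not_eq, exp_pos.
Qed.

Theorem lemmaA3 :
  forall (M alpha : R) (q : C) (eps : R),
    0 < M -> 0 < alpha -> Cmod q < 1 -> 0 < eps ->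
    exists C1 C2 : R, 0 < C1 /\ 0 < C2 /\
      forall (p : C) (k : R),
        Cmod p < Cmod q ->
        Cmod p = Rpower (Cmod q) k ->   (* p = x q^k with |x| = 1, k real *)
        forall z : C,
          1 / M < Cmod z < M ->
          (forall w : C, qpoch (Cmult w (Cpowr p (- alpha))) q = 0%C ->
             eps < Cmod (Cminus 1 (Cdiv z w))) ->
          (forall w : C, w <> 0%C ->
             qpoch (Cdiv (Cmult q (Cpowr p alpha)) w) q = 0%C ->
             eps < Cmod (Cminus 1 (Cdiv z w))) ->
          C1 <= Cmod (qpoch (Cmult z (Cpowr p (- alpha))) q)
                * Rpower (Cmod z) (- (k * alpha))
                * Rpower (Cmod q) ((k * alpha + 1) * (k * alpha) / 2)
             <= C2.
Proof.
  intros M alpha q eps HM Hal Hq Heps.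
  destruct (Req_dec (Cmod q) 0) as [Hq0|Hq0].
  { exists 1, 1. do 2 (split; [lra|]). intros p k Hp. pose proof (Cmod_ge_0 p). lra. }
  assert (Hq' : 0 < Cmod q < 1) by (pose proof (Cmod_ge_0 q); lra).
  destruct (exists_geom_small (M / Cmod q) (Cmod q)) as [I0 HI0];
    [apply Rlt_le, Rdiv_lt_0_compat; lra | lra |].
  set (Lo := prod_lower_bound (M / Cmod q) (Cmod q) (Rmin (eps / 2) 1) I0).
  exists (Cmod q / M * Lo ^ 2), (M * exp (M / Cmod q / (1 - Cmod q)) ^ 2).
  assert (HLo : 0 < Lo).
  { apply Rmult_lt_0_compat; [apply pow_lt, Rmin_glb_lt; lra | apply exp_pos]. }
  split; [apply Rmult_lt_0_compat; [apply Rdiv_lt_0_compat | apply pow_lt]; lra|].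
  split; [apply Rmult_lt_0_compat; [lra | apply pow_lt, exp_pos]|].
  intros p k Hp Hpk z Hz Hsep _.
  destruct (annulus_ln_bounds M (Cmod z) HM Hz) as (HM1 & Hz0 & Hl).
  assert (Hk : 1 < k) by (apply (Rpower_lt_self_exponent_gt1 (Cmod q)); [lra | now rewrite <- Hpk]).
  destruct (exists_nat_floor (k * alpha)) as [n Hn]; [nra|].
  assert (HP : Cpowr p (- alpha) <> 0%C)
    by (apply Cpowr_neq0; rewrite Hpk; apply Rgt_not_eq, exp_pos).
  unfold Rpower.
  apply (normalized_qpoch_bounds _ q eps M (k * alpha) (ln (Cmod z)) n I0); auto.
  - intro r. apply Cmod_scaled_pow; [lra | exact Hpk |].
    intro E. rewrite E, Cmod_0 in Hz0. lra.
  - apply qpoch_zero_separation; [exact HP | | exact Hsep].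
    intro E. rewrite E, Cmod_0 in Hq0. auto.
Qed.
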